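(* Any sequence $g_1,g_2,\dots\in\mathrm{PGL}_n(\mathbb C)$ contains a subsequence that converges to some point of $\mathrm{Hinge}^*_n$, in the following sense: there is a hinge $(P_1,\dots,P_k)$ and, for each $\sigma=1,\dots,k$, a sequence $\beta^{(\sigma)}_j\in\mathbb C^*$, such that (for representatives of the $g_j$ in $\mathrm{GL}_n(\mathbb C)$ along the subsequence) $\mathrm{graph}(\beta^{(\sigma)}_jg_j)$ converges to $P_\sigma$ in the Grassmannian $\mathrm{Gr}_n$ of $n$-dimensional subspaces of $\mathbb C^n\oplus\mathbb C^n$, for every $\sigma$.
   Context: Let $V=\mathbb C^n$. For a linear subspace (linear relation) $P\subset V\oplus V$: $\mathrm{Ker}\,P=\{v: v\oplus0\in P\}$, $\mathrm{Dom}\,P$ and $\mathrm{Im}\,P$ are the projections of $P$ to the first and second summands, $\mathrm{Indef}\,P=\{w:0\oplus w\in P\}$, $\mathrm{rk}\,P=\dim\mathrm{Dom}\,P-\dim\mathrm{Ker}\,P$. A hinge is a sequence $(P_1,\dots,P_k)$ of $n$-dimensional subspaces of $V\oplus V$ such that $\mathrm{Ker}\,P_j=\mathrm{Dom}\,P_{j+1}$ and $\mathrm{Im}\,P_j=\mathrm{Indef}\,P_{j+1}$ for $1\le j\le k-1$, $\mathrm{Dom}\,P_1=V$, $\mathrm{Im}\,P_k=V$, and $\mathrm{rk}\,P_j>0$ for all $j$. $\mathrm{Hinge}^*_n$ is the set of hinges modulo $(P_1,\dots,P_k)\sim(c_1P_1,\dots,c_kP_k)$, $c_j\in\mathbb C^*$,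 where $c\cdot P=\{v\oplus cw:v\oplus w\in P\}$. The graph of an operator $A$ is $\{v\oplus Av\}$. *)

(* C = R[i] (complex R) for an arbitrary realType R
   (complete archimedean ordered field, i.e. the reals up to isomorphism). *)
From HB Require Import structures.
From mathcomp Require Import all_boot all_order all_algebra.
From mathcomp Require Import reals complex.
Set Implicit Arguments. Unset Strict Implicit. Unset Printing Implicit Defensive.
Import Order.TTheory GRing.Theory Num.Theory.
Local Open Scope ring_scope.

Section Hinges.
Variables (R : realType) (n : nat).
Local Notation C := (complex R).

(* A linear subspace P of V (+) V, V = C^n, is represented by a matrix whose
   row space is P; a vector v (+) w is the row vector row_mx v w. *)

Definition DomP (P : 'M[C]_(n + n)) : 'M[C]_(n + n, n) := lsubmx P.
Definition ImP (P : 'M[C]_(n + n)) : 'M[C]_(n + n, n) := rsubmx P.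
(* KerP P = {v | v (+) 0 \in P}: rows u *m P whose right block vanishes. *)
Definition KerP (P : 'M[C]_(n + n)) := kermx (rsubmx P) *m lsubmx P.
(* IndefP P = {w | 0 (+) w \in P}. *)
Definition IndefP (P : 'M[C]_(n + n)) := kermx (lsubmx P) *m rsubmx P.
Definition rk (P : 'M[C]_(n + n)) : nat := (\rank (DomP P) - \rank (KerP P))%N.

(* A hinge (P_0, ..., P_{k-1}) (indices shifted by one w.r.t. the paper). *)
Definition is_hinge (k : nat) (P : nat -> 'M[C]_(n + n)) : Prop :=
  [/\ (0 < k)%N,
      (forall s, (s < k)%N -> \rank (P s) = n /\ (0 < rk (P s))%N),
      (forall s, (s.+1 < k)%N ->
          (KerP (P s) == DomP (P s.+1))%MS /\ (ImP (P s) == IndefP (P s.+1))%MS),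
      (DomP (P 0%N) == (1%:M : 'M[C]_n))%MS &
      (ImP (P k.-1) == (1%:M : 'M[C]_n))%MS].

(* graph of the operator x |-> A x (column convention): the subspace
   {v (+) A v}; in row-vector form its rows are v (+) v A^T. *)
Definition graph (A : 'M[C]_n) : 'M[C]_(n, n + n) := row_mx 1%:M A^T.

Definition cvgC (u : nat -> C) (c : C) : Prop :=
  forall eps : R, 0 < eps ->
    exists N : nat, forall j, (N <= j)%N -> `|u j - c| < (eps%:C)%C.

Definition cvg_mx m p (F : nat -> 'M[C]_(m, p)) (F0 : 'M[C]_(m, p)) : Prop :=
  forall i j, cvgC (fun t => F t i j) (F0 i j).

(* Convergence in the Grassmannian Gr_n of n-dimensional subspaces of
   C^n (+) C^n (quotient topology of n-frames modulo GL_n): the subspaces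
   Q_t converge to P iff they admit n-frames converging to an n-frame of P. *)
Definition cvg_Gr m1 m2 (Q : nat -> 'M[C]_(m1, n + n)) (P : 'M[C]_(m2, n + n))
  : Prop :=
  exists (F : nat -> 'M[C]_(n, n + n)) (F0 : 'M[C]_(n, n + n)),
    [/\ forall t, (F t == Q t)%MS, (F0 == P)%MS & cvg_mx F F0].

End Hinges.

From HB Require Import structures.
From mathcomp Require Import all_boot all_order all_algebra.
From mathcomp Require Import all_classical all_reals.
From mathcomp Require Import topology normedtype sequences.
From mathcomp Require Import perm complex lra.
Import Order.TTheory GRing.Theory Num.Theory.
Import numFieldNormedType.Exports.
Set Implicit Arguments. Unset Strict Implicit. Unset Printing Implicit Defensive.
Local Open Scope ring_scope.
Local Open Scope classical_set_scope.
Local Open Scope complex_scope.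

Lemma increasing_seq_cvgy (f : nat -> nat) : increasing_seq f -> f @ \oo --> \oo.
Proof.
move=> /increasing_seqP f_incr.
have f_ge n : (n <= f n)%N by elim: n => // n IH; exact: leq_ltn_trans IH (f_incr n).
move=> P [N _ NP]; exists N => // n Nn; apply: NP; exact: leq_trans Nn (f_ge n).
Qed.

Lemma increasing_seq_comp (f g : nat -> nat) :
  increasing_seq f -> increasing_seq g -> increasing_seq (f \o g).
Proof. by move=> f_incr g_incr m n /=; rewrite f_incr; exact: g_incr. Qed.

Section ComplexLimits.
Variable R : realType.
Local Notation C := (complex R).

Lemma cvgCP (u : nat -> C) c : cvgC u c <-> (u : nat -> C^o) @ \oo --> (c : C^o).
Proof.
rewrite cvgrPdist_lt; split=> [u_c eps eps0|u_c eps eps0].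
  move: eps0; rewrite ltcE /= => /andP[/eqP Im0 Re0].
  have [N uN] := u_c _ Re0; exists N => // j /uN.
  by rewrite distrC; case: eps Im0 {Re0 uN} => a b /= ->.
have [N _ uN] : \forall t \near \oo, `|c - u t| < eps%:C by apply: u_c; rewrite ltcR.
by exists N => j /uN; rewrite distrC.
Qed.

Lemma cvgC_subseq (u : nat -> C) c f :
  increasing_seq f -> cvgC u c -> cvgC (u \o f) c.
Proof.
by move=> /increasing_seq_cvgy f_oo /cvgCP u_c; apply/cvgCP; exact: (cvg_comp _ _ f_oo u_c).
Qed.

Lemma normC_real (x : R) : `|x%:C| = `|x|%:C.
Proof. by rewrite normc_def /= expr0n addr0 sqrtr_sqr. Qed.

Lemma normC_le_ReIm (z : C) : `|z| <= (`|complex.Re z| + `|complex.Im z|)%:C.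
Proof.
rewrite {1}[z]complexE rmorphD /=.
by rewrite (le_trans (ler_normD _ _)) // normrM !normC_real normc_def /= expr0n expr1n
  add0r sqrtr1 mul1r.
Qed.

Lemma cvgC_ReIm (u : nat -> C) a b :
  complex.Re (u t) @[t --> \oo] --> a -> complex.Im (u t) @[t --> \oo] --> b -> cvgC u (a +i* b).
Proof.
move=> /cvgrPdist_lt Re_a /cvgrPdist_lt Im_b eps eps0.
have eps20 : 0 < eps / 2 by rewrite divr_gt0.
have [N1 _ uN1] := Re_a _ eps20; have [N2 _ uN2] := Im_b _ eps20.
exists (maxn N1 N2) => j; rewrite geq_max => /andP[/uN1 Re_j /uN2 Im_j].
apply: le_lt_trans (normC_le_ReIm _) _; rewrite ltcR [eps]splitr.
move: Re_j Im_j; rewrite (distrC a) (distrC b); case: (u j) => x y /=.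
exact: ltrD.
Qed.
End ComplexLimits.

Lemma bounded_real_cvg_subseq (R : realType) (u : nat -> R) (K : R) :
  (forall t, `|u t| <= K) -> exists2 f, increasing_seq f & exists l : R, u (f t) @[t --> \oo] --> l.
Proof.
move=> u_le; have u_bnd : bounded_fun u.
  rewrite /bounded_near /=; near=> M => t _ /=; apply: (le_trans (u_le t)).
  by near: M; exact: nbhs_pinfty_ge (num_real K).
have [f f_incr /cvg_ex[l u_f]] := bolzano_weierstrass u_bnd.
by exists f => //; exists l.
Unshelve. all: by end_near.
Qed.

Section ComplexCompactness.
Variable R : realType.
Local Notation C := (complex R).

Lemma normC_ge_Im (z : C) : `|complex.Im z|%:C <= `|z|.
Proof. by rewrite normc_def lecR -sqrtr_sqr ler_wsqrtr // lerDr sqr_ge0. Qed.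

Lemma bounded_cvgC_subseq (u : nat -> C) (K : R) :
  (forall t, `|u t| <= K%:C) -> exists2 f, increasing_seq f & exists c, cvgC (u \o f) c.
Proof.
move=> u_le.
have [f f_incr [a Re_a]] : exists2 f, increasing_seq f &
    exists a : R, complex.Re (u (f t)) @[t --> \oo] --> a.
  apply: (@bounded_real_cvg_subseq _ (fun t => complex.Re (u t)) K) => t.
  by rewrite -lecR (le_trans (normc_ge_Re _)).
have [g g_incr [b Im_b]] : exists2 g, increasing_seq g &
    exists b : R, complex.Im (u (f (g t))) @[t --> \oo] --> b.
  apply: (@bounded_real_cvg_subseq _ (fun t => complex.Im (u (f t))) K) => t.
  by rewrite -lecR (le_trans (normC_ge_Im _)).
exists (f \o g); first exact: increasing_seq_comp.
exists (a +i* b); apply: cvgC_ReIm => //.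
exact: (cvg_comp _ _ (increasing_seq_cvgy g_incr) Re_a).
Qed.

Lemma bounded_family_cvgC_subseq (I : finType) (u : I -> nat -> C) (K : R) :
  (forall i t, `|u i t| <= K%:C) ->
  exists2 f, increasing_seq f & forall i, exists c, cvgC (u i \o f) c.
Proof.
move=> u_le.
suff [f f_incr u_f] : exists2 f, increasing_seq f &
    forall i, i \in enum I -> exists c, cvgC (u i \o f) c.
  by exists f => // i; apply: u_f; rewrite mem_enum.
elim: (enum I) => [|i s [f f_incr u_f]]; first by exists id.
have [g g_incr [c u_c]] := bounded_cvgC_subseq (fun t => u_le i (f t)).
exists (f \o g); first exact: increasing_seq_comp.
move=> j; rewrite in_cons => /predU1P[-> | /u_f[d u_d]]; first by exists c.
by exists d; exact: (cvgC_subseq g_incr u_d).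
Qed.

End ComplexCompactness.

Section MatrixLimits.
Variable R : realType.
Local Notation C := (complex R).

Lemma cvg_mx_subseq m n (A : nat -> 'M[C]_(m, n)) A0 f :
  increasing_seq f -> cvg_mx A A0 -> cvg_mx (A \o f) A0.
Proof. by move=> f_incr A_A0 i j; exact: (cvgC_subseq f_incr (A_A0 i j)). Qed.

Lemma cvg_mx_cst m n (A : 'M[C]_(m, n)) : cvg_mx (fun=> A) A.
Proof. by move=> i j; apply/cvgCP; exact: cvg_cst. Qed.

Lemma cvg_mxM m n p (A : nat -> 'M[C]_(m, n)) (B : nat -> 'M[C]_(n, p)) A0 B0 :
  cvg_mx A A0 -> cvg_mx B B0 -> cvg_mx (fun t => A t *m B t) (A0 *m B0).
Proof.
move=> A_A0 B_B0 i j; apply/cvgCP; rewrite mxE; under eq_cvg do rewrite mxE.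
apply: cvg_big => [|k _]; first exact: add_continuous.
by apply: cvgM; [exact/cvgCP/A_A0 | exact/cvgCP/B_B0].
Qed.

Lemma cvg_mxZ m n (a : nat -> C) a0 (A : nat -> 'M[C]_(m, n)) A0 :
  cvgC a a0 -> cvg_mx A A0 -> cvg_mx (fun t => a t *: A t) (a0 *: A0).
Proof.
move=> /cvgCP a_a0 A_A0 i j; apply/cvgCP; rewrite mxE; under eq_cvg do rewrite mxE.
by apply: cvgM; [exact: a_a0 | exact/cvgCP/A_A0].
Qed.

Lemma cvg_det n (A : nat -> 'M[C]_n) A0 :
  cvg_mx A A0 -> cvgC (fun t => \det (A t)) (\det A0).
Proof.
move=> A_A0; apply/cvgCP; apply: cvg_big => [|s _]; first exact: add_continuous.
apply: cvgM; first exact: cvg_cst.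
by apply: cvg_big => [|i _]; [exact: mul_continuous | apply/cvgCP].
Qed.

Lemma cvg_adj n (A : nat -> 'M[C]_n) A0 :
  cvg_mx A A0 -> cvg_mx (fun t => \adj (A t)) (\adj A0).
Proof.
move=> A_A0 i j; apply/cvgCP; rewrite mxE; under eq_cvg do rewrite mxE.
apply: cvgM; first exact: cvg_cst.
apply/cvgCP/cvg_det => k l; apply/cvgCP; rewrite !mxE; under eq_cvg do rewrite !mxE.
exact/cvgCP/A_A0.
Qed.
End MatrixLimits.

Section MatrixLimits2.
Variable R : realType.
Local Notation C := (complex R).

Lemma cvg_invmx n (A : nat -> 'M[C]_n) A0 :
  (forall t, A t \in unitmx) -> A0 \in unitmx -> cvg_mx A A0 ->
  cvg_mx (fun t => invmx (A t)) (invmx A0).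
Proof.
move=> A_unit A0_unit A_A0.
have invE B : B \in unitmx -> invmx B = (\det B)^-1 *: \adj B by rewrite /invmx => ->.
have -> : (fun t => invmx (A t)) = fun t => (\det (A t))^-1 *: \adj (A t).
  by apply/funext => t; rewrite invE.
rewrite invE //; apply: cvg_mxZ (cvg_adj A_A0); apply/cvgCP.
by apply: cvgV; [rewrite -unitfE -unitmxE | exact/cvgCP/cvg_det].
Qed.

Lemma cvg_row_mx m n1 n2 (A : nat -> 'M[C]_(m, n1)) (B : nat -> 'M[C]_(m, n2)) A0 B0 :
  cvg_mx A A0 -> cvg_mx B B0 -> cvg_mx (fun t => row_mx (A t) (B t)) (row_mx A0 B0).
Proof.
move=> A_A0 B_B0 i j; apply/cvgCP; rewrite -(splitK j); case: (fintype.split j) => k /=.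
  by rewrite row_mxEl; under eq_cvg do rewrite row_mxEl; exact/cvgCP/A_A0.
by rewrite row_mxEr; under eq_cvg do rewrite row_mxEr; exact/cvgCP/B_B0.
Qed.

Lemma cvg_col_mx m1 m2 n (A : nat -> 'M[C]_(m1, n)) (B : nat -> 'M[C]_(m2, n)) A0 B0 :
  cvg_mx A A0 -> cvg_mx B B0 -> cvg_mx (fun t => col_mx (A t) (B t)) (col_mx A0 B0).
Proof.
move=> A_A0 B_B0 i j; apply/cvgCP; rewrite -(splitK i); case: (fintype.split i) => k /=.
  by rewrite col_mxEu; under eq_cvg do rewrite col_mxEu; exact/cvgCP/A_A0.
by rewrite col_mxEd; under eq_cvg do rewrite col_mxEd; exact/cvgCP/B_B0.
Qed.

Lemma cvg_block_mx m1 m2 n1 n2 (A : nat -> 'M[C]_(m1, n1)) (B : nat -> 'M[C]_(m1, n2))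
    (D : nat -> 'M[C]_(m2, n1)) (E : nat -> 'M[C]_(m2, n2)) A0 B0 D0 E0 :
  cvg_mx A A0 -> cvg_mx B B0 -> cvg_mx D D0 -> cvg_mx E E0 ->
  cvg_mx (fun t => block_mx (A t) (B t) (D t) (E t)) (block_mx A0 B0 D0 E0).
Proof.
move=> A_A0 B_B0 D_D0 E_E0; rewrite block_mxEv.
have -> : (fun t => block_mx (A t) (B t) (D t) (E t)) =
    fun t => col_mx (row_mx (A t) (B t)) (row_mx (D t) (E t)).
  by apply/funext => t; rewrite block_mxEv.
by apply: cvg_col_mx; apply: cvg_row_mx.
Qed.

Lemma cvg_diag_mx n (x : nat -> 'I_n -> C) (x0 : 'I_n -> C) :
  (forall i, cvgC (x^~ i) (x0 i)) ->
  cvg_mx (fun t => diag_mx (\row_i x t i)) (diag_mx (\row_i x0 i)).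
Proof.
move=> x_x0 i j; apply/cvgCP; have [<-|ij] := eqVneq i j.
  under eq_cvg do rewrite !mxE eqxx mulr1n.
  by rewrite !mxE eqxx mulr1n; exact/cvgCP.
under eq_cvg do rewrite !mxE (negPf ij) mulr0n.
by rewrite !mxE (negPf ij) mulr0n; exact: cvg_cst.
Qed.
End MatrixLimits2.

Section LimitUnits.
Variable R : realType.
Local Notation C := (complex R).

Lemma sqr_det1_unitmx n (A : 'M[C]_n) : \det A ^+ 2 = 1 -> A \in unitmx.
Proof.
move=> detA; rewrite unitmxE unitfE; apply: contra_eq_neq detA => ->.
by rewrite expr0n eq_sym oner_neq0.
Qed.

Lemma cvg_mx_unitmx n (A : nat -> 'M[C]_n) A0 :
  cvg_mx A A0 -> (forall t, \det (A t) ^+ 2 = 1) -> A0 \in unitmx.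
Proof.
move=> A_A0 detA; apply: sqr_det1_unitmx.
have /cvgCP det2_lim : cvgC (fun t => \det (A t) ^+ 2) (\det A0 ^+ 2).
  by apply/cvgCP; rewrite expr2; under eq_cvg do rewrite expr2; apply: cvgM; apply/cvgCP/cvg_det.
have /cvgCP det2_1 : cvgC (fun t => \det (A t) ^+ 2) 1.
  by apply/cvgCP; under eq_cvg do rewrite detA; exact: cvg_cst.
exact: cvg_unique _ det2_lim det2_1.
Qed.

End LimitUnits.

Section PivotedLDU.
Variable F : numFieldType.

Definition mx_bounded m n (K : F) (M : 'M[F]_(m, n)) := forall i j, `|M i j| <= K.

Lemma exists_max_norm (T : finType) (f : T -> F) (x0 : T) :
  exists x, forall y, `|f y| <= `|f x|.
Proof.
suff [x fx] : exists x, forall y, y \in enum T -> `|f y| <= `|f x|.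
  by exists x => y; apply: fx; rewrite mem_enum.
elim: (enum T) => [|y s [x fx]]; first by exists x0.
have [le_yx|lt_xy] := real_leP (normr_real (f y)) (normr_real (f x)).
  by exists x => z; rewrite in_cons => /predU1P[->|/fx].
exists y => z; rewrite in_cons => /predU1P[->//|/fx le_zx].
exact: le_trans le_zx (ltW lt_xy).
Qed.

Lemma mx_bounded_block m1 m2 n1 n2 K (A : 'M[F]_(m1, n1)) (B : 'M[F]_(m1, n2))
    (D : 'M[F]_(m2, n1)) (E : 'M[F]_(m2, n2)) :
  mx_bounded K A -> mx_bounded K B -> mx_bounded K D -> mx_bounded K E ->
  mx_bounded K (block_mx A B D E).
Proof.
move=> bA bB bD bE i j; rewrite -(splitK i) -(splitK j).
case: (fintype.split i) (fintype.split j) => [i'|i'] [j'|j'] /=;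
  by rewrite ?block_mxEul ?block_mxEur ?block_mxEdl ?block_mxEdr.
Qed.

Lemma mx_bounded_scalar1 n : mx_bounded 1 (1%:M : 'M[F]_n).
Proof. by move=> i j; rewrite mxE; case: (i == j); rewrite ?normr1 ?normr0. Qed.

Lemma mx_bounded0 m n : mx_bounded 1 (0 : 'M[F]_(m, n)).
Proof. by move=> i j; rewrite mxE normr0. Qed.

Lemma tperm_mxEl m n (i j : 'I_m) (A : 'M[F]_(m, n)) k l :
  (tperm_mx i j *m A) k l = A (tperm i j k) l.
Proof. by rewrite -xrowE mxE. Qed.

Lemma tperm_mxEr m n (i j : 'I_n) (A : 'M[F]_(m, n)) k l :
  (A *m tperm_mx i j) k l = A k (tperm i j l).
Proof. by rewrite -xcolE mxE. Qed.

Lemma tperm_mxK n (i j : 'I_n) : (tperm_mx i j : 'M[F]_n) *m tperm_mx i j = 1%:M.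
Proof. by rewrite -perm_mxM tperm2 perm_mx1. Qed.

Lemma det_tperm_mx_sqr n (i j : 'I_n) : \det (tperm_mx i j : 'M[F]_n) ^+ 2 = 1.
Proof. by rewrite det_perm sqrr_sign. Qed.

Lemma diag_mx_cons n (d : nat -> F) :
  diag_mx (\row_(i < 1 + n) d i) = block_mx (d 0)%:M 0 0 (diag_mx (\row_(i < n) d i.+1)).
Proof.
rewrite -[\row_i d i](hsubmxK) diag_mx_row [diag_mx (lsubmx _)]mx11_scalar !mxE.
by congr block_mx; apply/matrixP => i j; rewrite !mxE.
Qed.

Lemma schur_LDU n (M : 'M[F]_(1 + n)) (A B : 'M[F]_n) (d : nat -> F) :
  ulsubmx M = (d 0)%:M -> d 0 != 0 ->
  drsubmx M - (d 0)^-1 *: (dlsubmx M *m ursubmx M) = A *m diag_mx (\row_i d i.+1) *m B ->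
  M = block_mx 1%:M 0 ((d 0)^-1 *: dlsubmx M) A *m diag_mx (\row_(i < 1 + n) d i)
      *m block_mx 1%:M ((d 0)^-1 *: ursubmx M) 0 B.
Proof.
move=> ulM m0 eS; rewrite diag_mx_cons.
rewrite !mulmx_block !mul1mx !mul0mx !mulmx0 !addr0 !add0r !mulmx1 -eS.
rewrite mul_mx_scalar mul_scalar_mx !scalerA mulfV // !scale1r scalemxAr.
by rewrite [_ + (_ - _)]addrC subrK mul0mx addr0 -ulM submxK.
Qed.

Lemma schur_complement_bound n (M : 'M[F]_(1 + n)) m :
  ulsubmx M = m%:M -> m != 0 -> mx_bounded `|m| M ->
  mx_bounded (2 * `|m|) (drsubmx M - m^-1 *: (dlsubmx M *m ursubmx M)).
Proof.
move=> ulM m0 bM i j; rewrite !mxE big_ord1 !mxE.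
have m_gt0 : 0 < `|m| by rewrite normr_gt0.
apply: le_trans (ler_normB _ _) _; rewrite mulr_natl mulr2n lerD //.
by rewrite normrM normfV normrM ler_pdivrMl // ler_pM.
Qed.


Lemma pivoted_LDU n (M : 'M[F]_n) : exists (A B : 'M[F]_n) (d : nat -> F),
  [/\ M = A *m diag_mx (\row_i d i) *m B,
      mx_bounded 1 A /\ mx_bounded 1 B,
      \det A ^+ 2 = 1 /\ \det B ^+ 2 = 1,
      forall k, (k.+1 < n)%N -> `|d k.+1| <= 2 * `|d k| &
      (0 < n)%N -> exists i j, d 0%N = M i j].
Proof.
have trivial_LDU n' (M' : 'M[F]_n') : M' = 0 -> exists (A B : 'M[F]_n') (d : nat -> F),
  [/\ M' = A *m diag_mx (\row_i d i) *m B, mx_bounded 1 A /\ mx_bounded 1 B,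
      \det A ^+ 2 = 1 /\ \det B ^+ 2 = 1,
      forall k, (k.+1 < n')%N -> `|d k.+1| <= 2 * `|d k| &
      (0 < n')%N -> exists i j, d 0%N = M' i j].
  move=> M'0; subst M'; exists 1%:M, 1%:M, (fun=> 0); split.
  - by apply/matrixP => i j; rewrite mulmx1 mul1mx !mxE mul0rn.
  - by split; exact: mx_bounded_scalar1.
  - by rewrite det1 expr1n.
  - by move=> k _; rewrite normr0 mulr0.
  - by case: n' => // n' _; exists ord0, ord0; rewrite mxE.
elim: n M => [|n IH] M; first by apply: trivial_LDU; apply/matrixP => -[].
have [[p q] max_pq] := exists_max_norm (fun x : 'I_n.+1 * 'I_n.+1 => M x.1 x.2) (ord0, ord0).
set m := M p q in max_pq; have bM i j : `|M i j| <= `|m| := max_pq (i, j).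
have [m0|m_neq0] := eqVneq m 0.
  apply: trivial_LDU; apply/matrixP => i j; apply/eqP.
  by rewrite mxE -normr_le0; apply: le_trans (bM i j) _; rewrite m0 normr0.
pose M1 : 'M[F]_(1 + n) := tperm_mx 0 p *m M *m tperm_mx 0 q.
have M1E i j : M1 i j = M (tperm 0 p i) (tperm 0 q j) by rewrite tperm_mxEr tperm_mxEl.
have M_M1 : M = tperm_mx 0 p *m M1 *m tperm_mx 0 q.
  by rewrite /M1 !mulmxA tperm_mxK mul1mx -mulmxA tperm_mxK mulmx1.
clearbody M1.
have bM1 : mx_bounded `|m| M1 by move=> i j; rewrite M1E.
have ulM1 : ulsubmx M1 = m%:M.
  rewrite [ulsubmx M1]mx11_scalar !mxE M1E (_ : lshift n 0 = 0); last exact: val_inj.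
  by rewrite !tpermL.
have [A' [B' [d' [eS [bA' bB'] [dA' dB'] d'_ratio d'0]]]] :=
  IH (drsubmx M1 - m^-1 *: (dlsubmx M1 *m ursubmx M1)).
pose d k := if k is k'.+1 then d' k' else m.
have b_pivot m1 n1 (X : 'M[F]_(m1, n1)) : mx_bounded `|m| X -> mx_bounded 1 (m^-1 *: X).
  by move=> bX i j; rewrite mxE normrM normfV ler_pdivrMl ?normr_gt0 // mulr1.
exists (tperm_mx 0 p *m block_mx 1%:M 0 (m^-1 *: dlsubmx M1) A'),
  (block_mx 1%:M (m^-1 *: ursubmx M1) 0 B' *m tperm_mx 0 q), d; split.
- by rewrite M_M1 {1}(@schur_LDU _ M1 A' B' d ulM1 m_neq0 eS) !mulmxA.
- have bA1 : mx_bounded 1 (block_mx 1%:M 0 (m^-1 *: dlsubmx M1) A').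
    apply: mx_bounded_block => //; [exact: mx_bounded_scalar1 | exact: mx_bounded0 |].
    by apply: b_pivot => k l; rewrite !mxE; exact: bM1.
  have bB1 : mx_bounded 1 (block_mx 1%:M (m^-1 *: ursubmx M1) 0 B').
    apply: mx_bounded_block => //; [exact: mx_bounded_scalar1 | | exact: mx_bounded0].
    by apply: b_pivot => k l; rewrite !mxE; exact: bM1.
  by split=> i j; rewrite ?tperm_mxEl ?tperm_mxEr; [exact: bA1 | exact: bB1].
- by rewrite !det_mulmx !exprMn (@det_lblock _ 1 n) (@det_ublock _ 1 n) det1 !mul1r
    !det_tperm_mx_sqr dA' dB' mul1r.
- case=> [|k] /= k_lt; last exact: d'_ratio.
  by have [i [j ->]] := d'0 k_lt; exact: (schur_complement_bound ulM1 m_neq0 bM1).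
- by exists p, q.
Qed.

End PivotedLDU.

Section LinearRelations.
Variables (R : realType) (n : nat).
Local Notation C := (complex R).
Implicit Types (P : 'M[C]_(n + n)) (x y v w : 'rV[C]_n).

Lemma sub_rel P v w :
  (row_mx v w <= P)%MS <-> exists u, v = u *m lsubmx P /\ w = u *m rsubmx P.
Proof.
split=> [/submxP[u] | [u [-> ->]]]; last by rewrite -mul_mx_row hsubmxK submxMl.
by rewrite -{1}[P]hsubmxK mul_mx_row => /eq_row_mx[-> ->]; exists u.
Qed.

Lemma sub_DomP P v : (v <= DomP P)%MS <-> exists w, (row_mx v w <= P)%MS.
Proof.
split=> [/submxP[u ->] | [w /sub_rel[u [-> _]]]]; last exact: submxMl.
by exists (u *m rsubmx P); apply/sub_rel; exists u.
Qed.

Lemma sub_KerP P v : (v <= KerP P)%MS <-> (row_mx v 0 <= P)%MS.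
Proof.
rewrite sub_rel; split=> [/submxP[u ->] | [u [-> /esym/sub_kermxP]]].
  exists (u *m kermx (rsubmx P)); split; first by rewrite /KerP mulmxA.
  by rewrite -mulmxA mulmx_ker mulmx0.
by move=> /submxP[u' ->]; rewrite -mulmxA submxMl.
Qed.

Lemma KerP_sub_DomP P : (KerP P <= DomP P)%MS.
Proof. exact: submxMl. Qed.

Lemma rk_gt0 P v : (v <= DomP P)%MS -> ~~ (v <= KerP P)%MS -> (0 < rk P)%N.
Proof.
move=> vD vK; rewrite subn_gt0.
have : (KerP P < DomP P)%MS.
  by rewrite ltmxE KerP_sub_DomP; apply: contra vK => /(submx_trans vD).
by rewrite ltmxErank => /andP[].
Qed.

Definition rel_inv P : 'M[C]_(n + n) := row_mx (rsubmx P) (lsubmx P).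

Lemma ImP_rel_inv P : ImP P = DomP (rel_inv P).
Proof. by rewrite /DomP row_mxKl. Qed.

Lemma IndefP_rel_inv P : IndefP P = KerP (rel_inv P).
Proof. by rewrite /KerP row_mxKl row_mxKr. Qed.

Lemma eqmx_subP m1 m2 (X : 'M[C]_(m1, n)) (Y : 'M[C]_(m2, n)) :
  (forall v, (v <= X)%MS <-> (v <= Y)%MS) -> (X == Y)%MS.
Proof. by move=> XY; apply/andP; split; apply/row_subP => i; apply/XY; exact: row_sub. Qed.

Definition diag_rel (x y : 'rV[C]_n) : 'M[C]_(n + n) := block_mx (diag_mx x) (diag_mx y) 0 0.

Lemma rel_inv_diag x y : rel_inv (diag_rel x y) = diag_rel y x.
Proof. by rewrite /rel_inv /diag_rel block_mxEh row_mxKl row_mxKr -block_mxEh. Qed.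

Lemma sub_diag_rel x y v w : (row_mx v w <= diag_rel x y)%MS <->
  forall i, exists c, v 0 i = c * x 0 i /\ w 0 i = c * y 0 i.
Proof.
rewrite /diag_rel block_mxEv row_mx0 -addsmxE addsmx0; split.
  case/submxP=> u; rewrite mul_mx_row => /eq_row_mx[-> ->] i.
  by exists (u 0 i); rewrite !mul_mx_diag !mxE.
case/fin_all_exists=> c vw; apply/submxP; exists (\row_i c i); rewrite mul_mx_row.
by congr row_mx; apply/matrixP => i j; rewrite ord1 mul_mx_diag !mxE; case: (vw j).
Qed.

Lemma sub_DomP_diag x y v :
  (v <= DomP (diag_rel x y))%MS <-> forall i, v 0 i != 0 -> x 0 i != 0.
Proof.
rewrite sub_DomP; split=> [[w /sub_diag_rel vw] i | vx].
  by have [c [-> _]] := vw i; apply: contraNneq => ->; rewrite mulr0.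
exists (\row_i (v 0 i / x 0 i * y 0 i)); apply/sub_diag_rel => i.
exists (v 0 i / x 0 i); rewrite mxE; split => //.
have [vi0|/vx xi_neq0] := eqVneq (v 0 i) 0; first by rewrite vi0 !mul0r.
by rewrite divfK.
Qed.

Lemma sub_KerP_diag x y v : (v <= KerP (diag_rel x y))%MS <->
  forall i, v 0 i != 0 -> (x 0 i != 0) && (y 0 i == 0).
Proof.
rewrite sub_KerP sub_diag_rel; split=> [vK i | vxy i].
  have [c [-> /esym/eqP]] := vK i; rewrite mxE mulf_eq0 => /orP[/eqP->|->].
    by rewrite mul0r eqxx.
  by rewrite andbT mulf_eq0 negb_or => /andP[].
have [vi0|/vxy/andP[xi_neq0 /eqP yi0]] := eqVneq (v 0 i) 0.
  by exists 0; rewrite vi0 mxE !mul0r.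
by exists (v 0 i / x 0 i); rewrite mxE yi0 mulr0 divfK.
Qed.

Lemma sub_ImP_diag x y w :
  (w <= ImP (diag_rel x y))%MS <-> forall i, w 0 i != 0 -> y 0 i != 0.
Proof. by rewrite ImP_rel_inv rel_inv_diag sub_DomP_diag. Qed.

Lemma sub_IndefP_diag x y w : (w <= IndefP (diag_rel x y))%MS <->
  forall i, w 0 i != 0 -> (y 0 i != 0) && (x 0 i == 0).
Proof. by rewrite IndefP_rel_inv rel_inv_diag sub_KerP_diag. Qed.

Lemma rank_diag_rel x y :
  (forall i, (x 0 i != 0) || (y 0 i != 0)) -> \rank (diag_rel x y) = n.
Proof.
move=> xy; rewrite /diag_rel block_mxEv row_mx0 -addsmxE addsmx0.
apply/eqP; rewrite eqn_leq rank_leq_row /=.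
pose x' := \row_i (if x 0 i != 0 then (x 0 i)^-1 else 0).
pose y' := \row_i (if x 0 i != 0 then 0 else (y 0 i)^-1).
have inv_xy : row_mx (diag_mx x) (diag_mx y) *m col_mx (diag_mx x') (diag_mx y') = 1%:M.
  rewrite mul_row_col !mul_diag_mx; apply/matrixP => i j; rewrite !mxE.
  rewrite !mulrnAr -mulrnDl; congr (_ *+ _).
  case: ifPn => [xi|]; first by rewrite mulr0 addr0 mulfV.
  by rewrite negbK => /eqP xi0; move: (xy i); rewrite xi0 eqxx /= => yi; rewrite mulr0 add0r mulfV.
by rewrite -[X in (X <= _)%N](mxrank1 (complex R) n) -inv_xy mxrankM_maxl.
Qed.

Lemma rk_diag_rel_gt0 x y i :
  x 0 i != 0 -> y 0 i != 0 -> (0 < rk (diag_rel x y))%N.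
Proof.
move=> xi yi; apply: (@rk_gt0 _ (delta_mx 0 i)).
  by apply/sub_DomP_diag => j; rewrite mxE eqxx /= pnatr_eq0 eqb0 negbK => /eqP ->.
by apply/negP => /sub_KerP_diag/(_ i); rewrite mxE !eqxx (negPf yi) andbF oner_eq0 => /(_ isT).
Qed.

End LinearRelations.

Lemma eqmx_kermx_mulr (F : fieldType) m p (X : 'M[F]_(m, p)) (B : 'M[F]_p) :
  B \in unitmx -> (kermx (X *m B) == kermx X)%MS.
Proof.
move=> B_unit; apply/andP; split; apply/sub_kermxP.
  have := mulmx_ker (X *m B); rewrite (mulmxA (kermx (X *m B))).
  by move=> /(congr1 (mulmx^~ (invmx B))); rewrite mulmxK // mul0mx.
by rewrite (mulmxA (kermx X)) mulmx_ker mul0mx.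
Qed.

Lemma mul_block_diag (F : pzRingType) m n1 n2 p1 p2 (P : 'M[F]_(m, n1 + n2))
    (A : 'M[F]_(n1, p1)) (B : 'M[F]_(n2, p2)) :
  P *m block_mx A 0 0 B = row_mx (lsubmx P *m A) (rsubmx P *m B).
Proof. by rewrite -{1}[P]hsubmxK mul_row_block !mulmx0 addr0 add0r. Qed.

Section HingeChangeOfBasis.
Variables (R : realType) (n : nat).
Implicit Types (P : 'M[complex R]_(n + n)) (A B : 'M[complex R]_n).

Lemma DomP_mul P A B : DomP (P *m block_mx A 0 0 B) = DomP P *m A.
Proof. by rewrite /DomP mul_block_diag row_mxKl. Qed.

Lemma KerP_mul P A B : B \in unitmx -> (KerP (P *m block_mx A 0 0 B) == KerP P *m A)%MS.
Proof.
move=> B_unit; apply/eqmxP; rewrite /KerP mul_block_diag row_mxKl row_mxKr mulmxA.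
exact: eqmxMr A (eqmxMr (lsubmx P) (eqmxP (eqmx_kermx_mulr (rsubmx P) B_unit))).
Qed.

Lemma rel_inv_mul P A B : rel_inv (P *m block_mx A 0 0 B) = rel_inv P *m block_mx B 0 0 A.
Proof. by rewrite /rel_inv !mul_block_diag !row_mxKl !row_mxKr. Qed.

Lemma ImP_mul P A B : ImP (P *m block_mx A 0 0 B) = ImP P *m B.
Proof. by rewrite !ImP_rel_inv rel_inv_mul DomP_mul. Qed.

Lemma IndefP_mul P A B : A \in unitmx -> (IndefP (P *m block_mx A 0 0 B) == IndefP P *m B)%MS.
Proof. by move=> A_unit; rewrite !IndefP_rel_inv rel_inv_mul KerP_mul. Qed.

Lemma eqmx1_mul m (X : 'M[complex R]_(m, n)) A :
  A \in unitmx -> (X == 1%:M)%MS -> (X *m A == 1%:M)%MS.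
Proof.
move=> A_unit /eqmxP X1; rewrite !(eqmxMr A X1) mul1mx submx1 sub1mx.
by rewrite row_full_unit.
Qed.

Lemma is_hinge_mul k (P : nat -> 'M[complex R]_(n + n)) A B : A \in unitmx -> B \in unitmx ->
  is_hinge k P -> is_hinge k (fun s => P s *m block_mx A 0 0 B).
Proof.
move=> A_unit B_unit [k_gt0 rkP chain Dom0 Im_last].
have A_free : row_free A by rewrite row_free_unit.
have T_free : row_free (block_mx A 0 0 B) by rewrite row_free_unit block_diag_mx_unit A_unit.
split=> [//| s /rkP[rankP rkP_gt0] | s /chain[KD II] | | ].
- split; first by rewrite mxrankMfree.
  by rewrite /rk DomP_mul (eqmx_rank (KerP_mul _ _ B_unit)) 2?mxrankMfree.
- rewrite DomP_mul ImP_mul; split.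
    by apply/eqmxP; apply: eqmx_trans (eqmxP (KerP_mul _ _ B_unit)) (eqmxMr _ (eqmxP KD)).
  by apply/eqmxP; apply: eqmx_trans (eqmxMr _ (eqmxP II)) (eqmx_sym (eqmxP (IndefP_mul _ _ A_unit))).
- by rewrite DomP_mul eqmx1_mul.
- by rewrite ImP_mul eqmx1_mul.
Qed.

End HingeChangeOfBasis.

Section DiagonalHinge.
Variables (R : realType) (n : nat).

Lemma diag_rel_hinge k (lv : 'I_n -> nat) (x y : nat -> 'rV[complex R]_n) :
  (0 < k)%N -> (forall i, lv i < k)%N -> (forall s, (s < k)%N -> exists i, lv i = s) ->
  (forall s i, (s < k)%N -> (x s 0 i == 0) = (lv i < s)%N) ->
  (forall s i, (s < k)%N -> (y s 0 i == 0) = (s < lv i)%N) ->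
  is_hinge k (fun s => diag_rel (x s) (y s)).
Proof.
move=> k_gt0 lv_lt lv_onto x_eq0 y_eq0; split=> // [s s_lt | s s1_lt | |].
- split; last first.
    have [i lv_i] := lv_onto s s_lt.
    by apply: (@rk_diag_rel_gt0 _ _ _ _ i); rewrite ?x_eq0 ?y_eq0 // lv_i ltnn.
  apply: rank_diag_rel => i; rewrite x_eq0 // y_eq0 // -negb_and.
  by apply/negP => /andP[/ltn_trans lt_s /lt_s]; rewrite ltnn.
- have s_lt : (s < k)%N by exact: ltnW.
  split; apply: eqmx_subP => v.
    rewrite sub_KerP_diag sub_DomP_diag.
    suff E i : (x s 0 i != 0) && (y s 0 i == 0) = (x s.+1 0 i != 0).
      by split=> vP i /vP; rewrite E.
    by rewrite !x_eq0 // y_eq0 // -!leqNgt andb_idl // => /ltnW.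
  rewrite sub_ImP_diag sub_IndefP_diag.
  suff E i : (y s 0 i != 0) = (y s.+1 0 i != 0) && (x s.+1 0 i == 0).
    by split=> vP i /vP; rewrite E.
  by rewrite !y_eq0 // x_eq0 // -!leqNgt ltnS andb_idl // => /leqW.
- apply: eqmx_subP => v; rewrite sub_DomP_diag submx1; split=> // _ i _.
  by rewrite x_eq0.
- apply: eqmx_subP => w; rewrite sub_ImP_diag submx1; split=> // _ i _.
  by rewrite y_eq0 ?ltn_predL // -leqNgt -ltnS prednK //; exact: lv_lt.
Qed.

End DiagonalHinge.

Lemma prod_ratio (F : fieldType) (d : nat -> F) i j :
  (i <= j)%N -> (forall k, (i <= k <= j)%N -> d k != 0) ->
  \prod_(i <= k < j) (d k.+1 / d k) = d j / d i.
Proof.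
move=> le_ij d_neq0.
rewrite (telescope_big (fun a b => d b / d a)) => [|k /andP[lt_ik lt_kj]].
  by case: ltnP => // le_ji; rewrite (@anti_leq i j) ?le_ij // divff // d_neq0 ?leqnn ?le_ij.
by rewrite /= mulrC mulrA mulfVK // d_neq0 // (ltnW lt_ik) (ltnW lt_kj).
Qed.

Section Levels.
Variables (F : idomainType) (rl : nat -> F).

Definition level i := count (fun k => rl k == 0) (iota 0 i).

Lemma levelD i j : (i <= j)%N ->
  level j = (level i + count (fun k => rl k == 0%R) (iota i (j - i)))%N.
Proof. by move=> le_ij; rewrite /level -{1}(subnKC le_ij) iotaD count_cat. Qed.

Lemma level_mono : {homo level : i j / (i <= j)%N}.
Proof. by move=> i j /levelD ->; rewrite leq_addr. Qed.

Lemma levelS i : (level i.+1 <= (level i).+1)%N.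
Proof. by rewrite (levelD (leqnSn i)) subSnn /= addn0 -addn1 leq_add2l leq_b1. Qed.

Lemma prod_eq0_level i j : (i <= j)%N ->
  (\prod_(i <= k < j) rl k == 0) = (level i < level j)%N.
Proof.
move=> le_ij; rewrite prodf_seq_eq0 (levelD le_ij) -{1}(addn0 (level i)) ltn_add2l.
by rewrite has_count.
Qed.

Lemma level_ivt m s : (s <= level m)%N -> exists2 a, (a <= m)%N & level a = s.
Proof.
elim: m => [|m IH] s_le; first by exists 0%N => //; apply/eqP; rewrite eqn_leq s_le.
have [le_s|lt_s] := leqP s (level m).
  by have [a a_le <-] := IH le_s; exists a => //; exact: leqW.
by exists m.+1 => //; apply/eqP; rewrite eqn_leq s_le (leq_trans (levelS m) lt_s).
Qed.

Definition level_start n s := find (fun i => level i == s) (iota 0 n).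

Lemma level_startP n s : (0 < n)%N -> (s <= level n.-1)%N ->
  [/\ (level_start n s < n)%N, level (level_start n s) = s &
      forall i, (i < n)%N -> (level i < s)%N = (i < level_start n s)%N].
Proof.
move=> n_gt0 s_le; set a := level_start n s.
have has_s : has (fun i => level i == s) (iota 0 n).
  have [b b_le lv_b] := level_ivt s_le; apply/hasP; exists b; last exact/eqP.
  by rewrite mem_iota add0n (leq_ltn_trans b_le) ?ltn_predL.
have a_lt : (a < n)%N by rewrite -[X in (_ < X)%N](size_iota 0 n) -has_find.
have lv_a : level a = s.
  by have /eqP := nth_find 0%N has_s; rewrite nth_iota // add0n.
split=> // i i_lt; apply/idP/idP => [lt_s | lt_ia].
  by rewrite ltnNge; apply: contraL lt_s => /level_mono; rewrite lv_a -leqNgt.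
have := before_find 0%N lt_ia; rewrite nth_iota ?add0n ?(ltn_trans lt_ia) // => lv_i.
by rewrite ltn_neqAle lv_i -lv_a level_mono // ltnW.
Qed.

End Levels.

Section LevelFrames.
Variables (R : realType) (n : nat) (d : nat -> nat -> complex R) (rl : nat -> complex R).
Hypothesis d_neq0 : forall t i, (i < n)%N -> d t i != 0.
Hypothesis ratio_cvg : forall k, (k.+1 < n)%N -> cvgC (fun t => d t k.+1 / d t k) (rl k).

Local Notation lv := (level rl).
Local Notation a := (level_start rl n).

Lemma cvg_ratio i j : (i <= j)%N -> (j < n)%N ->
  cvgC (fun t => d t j / d t i) (\prod_(i <= k < j) rl k).
Proof.
move=> le_ij lt_jn; apply/cvgCP.
have -> : (fun t => d t j / d t i) = fun t => \prod_(i <= k < j) (d t k.+1 / d t k).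
  apply/funext => t; rewrite prod_ratio // => k /andP[_ le_kj].
  exact: d_neq0 (leq_ltn_trans le_kj lt_jn).
rewrite big_seq_cond; under eq_cvg do rewrite big_seq_cond.
apply: cvg_big => [|k /andP[]]; first exact: mul_continuous.
rewrite mem_index_iota => /andP[_ lt_kj] _; apply/cvgCP/ratio_cvg.
exact: leq_ltn_trans lt_kj lt_jn.
Qed.

Definition frameX t s i := if (lv i < s)%N then d t (a s) / d t i else 1.
Definition frameY t s i := if (lv i < s)%N then 1 else d t i / d t (a s).
Definition limX s i : complex R := if (lv i < s)%N then 0 else 1.
Definition limY s i := if (lv i < s)%N then 1 else \prod_(a s <= k < i) rl k.

Hypothesis n_gt0 : (0 < n)%N.

Lemma frameX_neq0 t s i : (s <= lv n.-1)%N -> (i < n)%N -> frameX t s i != 0.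
Proof.
move=> /(level_startP n_gt0)[a_lt _ _] i_lt; rewrite /frameX.
by case: ifP => _; rewrite ?oner_neq0 // mulf_neq0 ?invr_eq0 ?d_neq0.
Qed.

Lemma frameYE t s i : (s <= lv n.-1)%N -> (i < n)%N ->
  frameY t s i = (d t (a s))^-1 * frameX t s i * d t i.
Proof.
move=> /(level_startP n_gt0)[a_lt _ _] i_lt; rewrite /frameX /frameY.
case: ifP => _; last by rewrite mulr1 mulrC.
by rewrite mulrA mulVf ?d_neq0 // mul1r mulVf ?d_neq0.
Qed.

Lemma cvg_frameX s i : (s <= lv n.-1)%N -> (i < n)%N -> cvgC (fun t => frameX t s i) (limX s i).
Proof.
move=> /(level_startP n_gt0)[a_lt lv_a a_min] i_lt; rewrite /frameX /limX.
case: ifP => lv_i; last by apply/cvgCP; exact: cvg_cst.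
have le_ia : (i <= a s)%N by rewrite ltnW // -a_min.
suff <- : \prod_(i <= k < a s) rl k = 0 by exact: cvg_ratio.
by apply/eqP; rewrite prod_eq0_level // lv_a.
Qed.

Lemma cvg_frameY s i : (s <= lv n.-1)%N -> (i < n)%N -> cvgC (fun t => frameY t s i) (limY s i).
Proof.
move=> /(level_startP n_gt0)[a_lt lv_a a_min] i_lt; rewrite /frameY /limY.
case: ifP => lv_i; first by apply/cvgCP; exact: cvg_cst.
by apply: cvg_ratio => //; rewrite leqNgt -a_min ?lv_i.
Qed.

Lemma limX_eq0 s i : (limX s i == 0) = (lv i < s)%N.
Proof. by rewrite /limX; case: ifP; rewrite ?eqxx ?oner_eq0. Qed.

Lemma limY_eq0 s i : (s <= lv n.-1)%N -> (i < n)%N -> (limY s i == 0) = (s < lv i)%N.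
Proof.
move=> /(level_startP n_gt0)[a_lt lv_a a_min] i_lt; rewrite /limY.
case: ifP => lv_i; first by rewrite oner_eq0 ltnNge ltnW.
by rewrite prod_eq0_level ?lv_a // leqNgt -a_min ?lv_i.
Qed.

End LevelFrames.

Lemma eqmx_graph_frame (R : realType) n (A B : 'M[complex R]_n) (dv x y : 'rV[complex R]_n)
    (beta : complex R) :
  A \in unitmx -> (forall i, x 0 i != 0) -> (forall i, y 0 i = beta * x 0 i * dv 0 i) ->
  (row_mx (diag_mx x) (diag_mx y) *m block_mx (invmx A) 0 0 B
     == graph (beta *: (A *m diag_mx dv *m B)^T))%MS.
Proof.
move=> A_unit x_neq0 yE; set E := diag_mx x *m invmx A.
have E_unit : E \in unitmx.
  by rewrite unitmx_mul unitmx_inv A_unit unitmxE det_diag unitfE andbT; apply/prodf_neq0.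
have -> : diag_mx y = beta *: (diag_mx x *m diag_mx dv).
  by apply/matrixP => i j; rewrite mul_diag_mx !mxE yE !mulrnAr mulrA.
rewrite /graph; have -> : (beta *: (A *m diag_mx dv *m B)^T)^T = beta *: (A *m diag_mx dv *m B).
  by apply/matrixP => i j; rewrite !mxE.
rewrite mul_block_diag row_mxKl row_mxKr.
have -> : row_mx (diag_mx x *m invmx A) (beta *: (diag_mx x *m diag_mx dv) *m B) =
    E *m row_mx 1%:M (beta *: (A *m diag_mx dv *m B)).
  by rewrite mul_mx_row mulmx1 -scalemxAr !mulmxA mulmxKV // -scalemxAl.
by apply/eqmxP; apply: eqmxMfull; rewrite row_full_unit.
Qed.

Section HingeLimit.
Variables (R : realType) (n : nat).
Local Notation C := (complex R).
Variables (A B : nat -> 'M[C]_n) (A0 B0 : 'M[C]_n) (d : nat -> nat -> C) (rl : nat -> C).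
Hypotheses (n_gt0 : (0 < n)%N) (A_unit : forall t, A t \in unitmx).
Hypotheses (A0_unit : A0 \in unitmx) (B0_unit : B0 \in unitmx).
Hypotheses (A_cvg : cvg_mx A A0) (B_cvg : cvg_mx B B0).
Hypothesis d_neq0 : forall t i, (i < n)%N -> d t i != 0.
Hypothesis ratio_cvg : forall k, (k.+1 < n)%N -> cvgC (fun t => d t k.+1 / d t k) (rl k).

Local Notation lv := (level rl).

Lemma hinge_limit : exists (k : nat) (P : nat -> 'M[C]_(n + n)) (beta : nat -> nat -> C),
  [/\ is_hinge k P, forall s t, (s < k)%N -> beta s t != 0 &
      forall s, (s < k)%N ->
        cvg_Gr (fun t => graph (beta s t *: (A t *m diag_mx (\row_i d t i) *m B t)^T)) (P s)].
Proof.
pose x s := \row_(i < n) limX rl s i; pose y s := \row_(i < n) limY n rl s i.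
pose T0 := block_mx (invmx A0) 0 0 B0.
exists (lv n.-1).+1, (fun s => diag_rel (x s) (y s) *m T0),
  (fun s t => (d t (level_start rl n s))^-1); split.
- apply: is_hinge_mul; rewrite ?unitmx_inv //.
  apply: (diag_rel_hinge (lv := fun i : 'I_n => lv i)) => // [i | s /(level_startP n_gt0)[a_lt lv_a _] | s i _ | s i s_lt].
  + by rewrite ltnS; apply: level_mono; rewrite -ltnS prednK.
  + by exists (Ordinal a_lt).
  + by rewrite mxE limX_eq0.
  + by rewrite mxE limY_eq0.
- by move=> s t /(level_startP n_gt0)[a_lt _ _]; rewrite invr_eq0 d_neq0.
move=> s s_lt.
exists (fun t => row_mx (diag_mx (\row_i frameX n d rl t s i)) (diag_mx (\row_i frameY n d rl t s i))
  *m block_mx (invmx (A t)) 0 0 (B t)), (row_mx (diag_mx (x s)) (diag_mx (y s)) *m T0); split.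
- by move=> t; apply: eqmx_graph_frame => // i; rewrite !mxE ?frameX_neq0 // frameYE.
- by rewrite /diag_rel block_mxEv row_mx0 mul_col_mx mul0mx -!addsmxE !addsmx0 submx_refl.
apply: cvg_mxM.
  by apply: cvg_row_mx; apply: cvg_diag_mx => i; [exact: cvg_frameX | exact: cvg_frameY].
apply: cvg_block_mx => //; [exact: cvg_invmx | exact: cvg_mx_cst | exact: cvg_mx_cst].
Qed.

End HingeLimit.

Section ConvergentLDU.
Variables (R : realType) (n : nat).
Local Notation C := (complex R).

Lemma pivoted_LDU_subseq (M : nat -> 'M[C]_n) : (forall t, M t \in unitmx) ->
  exists (phi : nat -> nat) (A B : nat -> 'M[C]_n) (d : nat -> nat -> C)
         (A0 B0 : 'M[C]_n) (rl : nat -> C),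
  [/\ increasing_seq phi, forall t, M (phi t) = A t *m diag_mx (\row_i d t i) *m B t,
      [/\ forall t, A t \in unitmx, A0 \in unitmx & B0 \in unitmx],
      cvg_mx A A0 /\ cvg_mx B B0 &
      [/\ forall t i, (i < n)%N -> d t i != 0 &
          forall k, (k.+1 < n)%N -> cvgC (fun t => d t k.+1 / d t k) (rl k)]].
Proof.
move=> M_unit; have /choice[fA /choice[fB /choice[fd LDU]]] := fun t => pivoted_LDU (M t).
have d_neq0 t i : (i < n)%N -> fd t i != 0.
  move=> i_lt; have [M_LDU _ _ _ _] := LDU t.
  have := M_unit t; rewrite unitmxE unitfE M_LDU !det_mulmx det_diag !mulf_eq0 !negb_or.
  case/andP=> /andP[_ /prodf_neq0 d_prod] _.
  by have := d_prod (Ordinal i_lt) isT; rewrite mxE.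
pose rho t k := if (k.+1 < n)%N then fd t k.+1 / fd t k else 0.
pose u (z : ('I_n * 'I_n) + ('I_n * 'I_n) + 'I_n) t :=
  match z with inl (inl (i, j)) => fA t i j | inl (inr (i, j)) => fB t i j | inr k => rho t k end.
have u_bnd z t : `|u z t| <= (2 : R)%:C.
  have [_ [bA bB] _ d_ratio _] := LDU t; rewrite (rmorph_nat (real_complex R) 2).
  case: z => [[[i j]|[i j]]|k] /=; try by apply: le_trans (ler1n _ 2).
  rewrite /rho; case: ifP => k_lt; last by rewrite normr0 ler0n.
  have d_gt0 : 0 < `|fd t k| by rewrite normr_gt0 d_neq0 // ltnW.
  by rewrite normrM normfV ler_pdivrMr // d_ratio.
have [phi phi_incr /choice[lim u_lim]] := bounded_family_cvgC_subseq u_bnd.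
pose A0 := \matrix_(i, j) lim (inl (inl (i, j))).
pose B0 := \matrix_(i, j) lim (inl (inr (i, j))).
have A_cvg : cvg_mx (fA \o phi) A0 by move=> i j; rewrite mxE; exact: u_lim (inl (inl (i, j))).
have B_cvg : cvg_mx (fB \o phi) B0 by move=> i j; rewrite mxE; exact: u_lim (inl (inr (i, j))).
have detA t : \det (fA t) ^+ 2 = 1 by have [_ _ [] ] := LDU t.
have detB t : \det (fB t) ^+ 2 = 1 by have [_ _ [] ] := LDU t.
pose rl k := oapp (fun k' : 'I_n => lim (inr k')) 0 (insub k).
exists phi, (fA \o phi), (fB \o phi), (fd \o phi), A0, B0, rl; split=> //.
- by move=> t; have [] := LDU (phi t).
- split=> [t||]; first exact: sqr_det1_unitmx (detA (phi t)).
    exact: cvg_mx_unitmx A_cvg (fun t => detA (phi t)).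
  exact: cvg_mx_unitmx B_cvg (fun t => detB (phi t)).
split=> [t i|]; first exact: d_neq0.
move=> k k_lt; have k_lt' : (k < n)%N := ltnW k_lt.
rewrite /rl (insubT (fun i => i < n)%N k_lt') /=; apply/cvgCP.
have /cvgCP := u_lim (inr (Sub k k_lt')); apply: cvg_trans; apply: near_eq_cvg; near=> t.
by rewrite /= /rho k_lt.
Unshelve. all: by end_near.
Qed.

End ConvergentLDU.

Theorem lemma2p1 (R : realType) (n : nat) (hn : (0 < n)%N)
    (g : nat -> 'M[complex R]_n) (hg : forall j, g j \in unitmx) :
  exists (phi : nat -> nat) (k : nat) (P : nat -> 'M[complex R]_(n + n))
         (beta : nat -> nat -> complex R),
    [/\ (forall j, (phi j < phi j.+1)%N),
        is_hinge k P,
        (forall s j, (s < k)%N -> beta s j != 0) &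
        (forall s, (s < k)%N ->
           cvg_Gr (fun j => graph (beta s j *: g (phi j))) (P s))].
Proof.
have gT_unit j : (g j)^T \in unitmx by rewrite unitmx_tr.
have [phi [A [B [d [A0 [B0 [rl [phi_incr gE [A_unit A0_unit B0_unit] [A_cvg B_cvg]
  [d_neq0 ratio_cvg]]]]]]]]] := pivoted_LDU_subseq gT_unit.
have [k [P [beta [P_hinge beta_neq0 P_lim]]]] :=
  hinge_limit hn A_unit A0_unit B0_unit A_cvg B_cvg d_neq0 ratio_cvg.
exists phi, k, P, beta; split=> // [j|s s_lt]; first by move/increasing_seqP: phi_incr; apply.
by under eq_fun do rewrite -[g _]trmxK gE; exact: P_lim.
Qed.
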